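(* There exists $n_0$ such that for all $n\ge n_0$ the following holds. Let $\mathcal{H} = (X,\mathcal{F})$ be a hypergraph with $|X|=n$ and $|\mathcal{F}|\leq n^{\log(n)}$ such that every hyperedge contains at least $\log^3(n)$ vertices. Then in the Waiter-Client game on $\mathcal{H}$, Waiter has a strategy such that at the end of the game the set $C$ of Client's elements satisfies $|C\cap f| \geq \frac{|f|}{100}$ for every $f\in \mathcal{F}$.
   Context: Waiter-Client game on a hypergraph $(X,\mathcal{F})$: in each round Waiter offers Client two previously unclaimed elements of $X$; Client keeps one and the other goes to Waiter; if in the final round only one unclaimed element remains, it goes to Waiter. The game ends when all elements are claimed. *)

From mathcomp Require Import all_boot.
From Stdlib Require Import Reals.
Set Implicit Arguments. Unset Strict Implicit. Unset Printing Implicit Defensive.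

(* State: U = set of still-unclaimed elements, C = Client's elements so far.
   [waiter_wins P U C] : from this state, Waiter has a strategy guaranteeing
   that Client's final set satisfies P.
   - If at most one element is unclaimed, the game ends (a single leftover
     element goes to Waiter, so C is Client's final set).
   - Otherwise Waiter offers two distinct unclaimed elements x, y, and must
     win whichever of them Client keeps (the other goes to Waiter). *)
Inductive waiter_wins (T : finType) (P : {set T} -> Prop)
  : {set T} -> {set T} -> Prop :=
| ww_end (U C : {set T}) :
    #|U| <= 1 -> P C -> waiter_wins P U C
| ww_step (U C : {set T}) (x y : T) :
    x \in U -> y \in U -> x != y ->
    waiter_wins P (U :\ x :\ y) (x |: C) ->
    waiter_wins P (U :\ x :\ y) (y |: C) ->
    waiter_wins P U C.

Definition waiter_strategy (T : finType) (P : {set T} -> Prop) : Prop :=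
  waiter_wins P [set: T] set0.

From mathcomp Require Import all_boot.
From Stdlib Require Import Reals Lra.
(* Reals reactivates [^] as [Nat.pow] on nat; restore ssrnat's [expn]. *)
From mathcomp Require Import ssrnat zify.
Set Implicit Arguments. Unset Strict Implicit. Unset Printing Implicit Defensive.

(* Beck-type potential argument.  While U is unclaimed and C is Client's set,
   a hyperedge f weighs 2^|X\f| * 2^|U∩f| * 3^|W∩f|, W being Waiter's set: it
   starts at 2^n and is halved by each Client vertex of f, multiplied by 3/2 by
   each Waiter vertex.  If Client takes x and Waiter y, the total potential Ψ
   grows by at most (deg y - deg x)/2, so Waiter offers a pair with nearly
   equal degrees; by pigeonhole one with |deg x - deg y| <= Ψ/(|U|-1) exists,
   and then Ψ * (|U|+1) never increases.  At the end Ψ <= |F| 2^n (n+1), but an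
   edge with |C∩f| < |f|/100 alone weighs about 2^(n-|f|) 3^(0.99|f|), which is
   larger once |f| >= log^3 n and |F| <= n^(log n). *)

Lemma potential_bound_step (p p' da db m K : nat) :
  2 * p' + da <= 2 * p + db -> m.+1 * (db - da) <= p -> p * m.+3 <= K ->
  p' * m.+1 <= K.
Proof. nia. Qed.

Section Potential.
Variable T : finType.
Implicit Types (f U C : {set T}) (F : {set {set T}}).

Definition vertex_weight f U C (z : T) : nat :=
  if z \in f then (if z \in C then 1 else if z \in U then 2 else 3) else 2.

Definition edge_weight f U C : nat := \prod_(z : T) vertex_weight f U C z.

Definition potential F U C : nat := \sum_(f in F) edge_weight f U C.

Definition degree F U C (z : T) : nat := \sum_(f in F) (z \in f) * edge_weight f U C.

Lemma edge_weight_le_potential F f U C : f \in F -> edge_weight f U C <= potential F U C.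
Proof. by move=> fF; rewrite /potential (bigD1 f) //= leq_addr. Qed.

Lemma degree_le_potential F U C z : degree F U C z <= potential F U C.
Proof. by apply: leq_sum => f _; case: (z \in f); rewrite ?mul1n. Qed.

Lemma potential_init F : potential F [set: T] set0 = #|F| * 2 ^ #|T|.
Proof.
rewrite /potential (eq_bigr (fun _ => 2 ^ #|T|)) ?sum_nat_const // => f _.
rewrite /edge_weight -prod_nat_const; apply: eq_bigr => z _.
by rewrite /vertex_weight !inE; case: (z \in f).
Qed.

Lemma edge_weight_move f U C x y :
  x \in U -> y \in U -> x != y -> [disjoint U & C] ->
  2 * edge_weight f (U :\ x :\ y) (x |: C) + (x \in f) * edge_weight f U C
   <= 2 * edge_weight f U C + (y \in f) * edge_weight f U C.
Proof.
move=> xU yU xy UC; have yx : y != x by rewrite eq_sym.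
have split_xy (h : T -> nat) :
    \prod_z h z = h x * h y * \prod_(z | (z != x) && (z != y)) h z.
  by rewrite (bigD1 x) //= (bigD1 y) //= mulnA.
rewrite /edge_weight !split_xy.
have -> : \prod_(z | (z != x) && (z != y)) vertex_weight f (U :\ x :\ y) (x |: C) z
        = \prod_(z | (z != x) && (z != y)) vertex_weight f U C z.
  by apply: eq_bigr => z /andP [zx zy]; rewrite /vertex_weight !inE (negbTE zx) (negbTE zy).
rewrite /vertex_weight !inE eqxx (negbTE yx).
rewrite (disjointFr UC xU) (disjointFr UC yU) xU yU /=.
by case: (x \in f); case: (y \in f); rewrite /= ?eqxx /=; lia.
Qed.

Lemma potential_move F U C x y :
  x \in U -> y \in U -> x != y -> [disjoint U & C] ->
  2 * potential F (U :\ x :\ y) (x |: C) + degree F U C x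
   <= 2 * potential F U C + degree F U C y.
Proof.
move=> xU yU xy UC; rewrite /potential /degree !big_distrr -!big_split /=.
by apply: leq_sum => f _; apply: edge_weight_move.
Qed.

Lemma disjoint_move U C x y :
  [disjoint U & C] -> [disjoint U :\ x :\ y & x |: C].
Proof.
move=> UC; apply/pred0P => z /=; rewrite !inE.
have [zU | zNU] := boolP (z \in U); last by rewrite !andbF.
by rewrite (disjointFr UC zU) orbF; case: (z == x); rewrite /= ?andbF.
Qed.

Lemma separated_spread (d : T -> nat) M m (S : {set T}) : #|S| = m.+1 ->
  {in S &, forall x y, x != y -> d y <= d x -> M < d x - d y} ->
  exists z w, [/\ z \in S, w \in S & d w + m * M.+1 <= d z].
Proof.
elim: m S => [|m IH] S cS sepS.
  have /set0Pn [z Sz] : S != set0 by rewrite -card_gt0 cS.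
  by exists z, z; rewrite mul0n addn0.
have /set0Pn [z0 Sz0] : S != set0 by rewrite -card_gt0 cS.
case: (arg_maxnP d Sz0) => zm Szm' zm_max; have Szm : zm \in S := Szm'.
have cS' : #|S :\ zm| = m.+1 by move: cS; rewrite (cardsD1 zm) Szm => -[].
have [|z [w [Sz Sw dwz]]] := IH (S :\ zm) cS'.
  by move=> x y /setD1P [_ xS] /setD1P [_ yS]; apply: sepS.
move: Sz Sw => /setD1P [zzm Sz] /setD1P [_ Sw].
have := sepS zm z Szm Sz; rewrite eq_sym zzm => /(_ isT (zm_max z Sz)) sep.
by exists zm, w; split => //; rewrite mulSn; lia.
Qed.

Lemma exists_close_pair (d : T -> nat) U P m : #|U| = m.+2 ->
  {in U, forall z, d z <= P} ->
  exists x y, [/\ x \in U, y \in U, x != y, d y <= d x & m.+1 * (d x - d y) <= P].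
Proof.
move=> cU dP.
pose close x y := [&& x != y, d y <= d x & m.+1 * (d x - d y) <= P].
have [/exists_inP [x xU /exists_inP [y yU /and3P [? ? ?]]] | no_pair] :=
  boolP [exists x in U, exists y in U, close x y]; first by exists x, y.
have [|z [w [zU _ dwz]]] := separated_spread (d := d) (M := P %/ m.+1) cU.
  move=> x y xU yU xy dyx; rewrite ltnNge; apply: contra no_pair => small.
  apply/exists_inP; exists x => //; apply/exists_inP; exists y => //.
  rewrite /close xy dyx (leq_trans (leq_mul (leqnn _) small)) // mulnC.
  exact: leq_divM.
have := ltn_ceil P (ltn0Sn m); have := dP z zU; rewrite mulnC; lia.
Qed.

Lemma waiter_wins_potential F (P : {set T} -> Prop) K :
  (forall U C, #|U| <= 1 -> potential F U C <= K -> P C) ->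
  forall U C, [disjoint U & C] -> potential F U C * #|U|.+1 <= K ->
  waiter_wins P U C.
Proof.
move=> win_end U C; move cU: #|U| => m.
elim/ltn_ind: m U C cU => m IH U C cU UC bound.
case: m IH cU bound => [|[|m]] IH cU bound.
1,2: have U1 : #|U| <= 1 by rewrite cU.
1,2: by apply: (ww_end U1); apply: (win_end _ _ U1); lia.
have [x [y [xU yU xy dyx gap]]] :=
  exists_close_pair cU (fun z _ => degree_le_potential F U C z).
have client_takes a b : a \in U -> b \in U -> a != b ->
    m.+1 * (degree F U C b - degree F U C a) <= potential F U C ->
    waiter_wins P (U :\ a :\ b) (a |: C).
  move=> aU bU ab gap_ab; apply: (IH m) => //.
  - by move: cU; rewrite (cardsD1 a) aU (cardsD1 b) !inE eq_sym ab bU => -[].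
  - exact: disjoint_move.
  - exact: potential_bound_step (potential_move F aU bU ab UC) gap_ab bound.
apply: (ww_step xU yU xy); first by apply: client_takes; rewrite // (eqP dyx) muln0.
by rewrite !setDDl setUC -setDDl; apply: client_takes; rewrite // eq_sym.
Qed.

Lemma edge_weight_lb f U C :
  2 ^ #|~: f| * 3 ^ #|f :\: (C :|: U)| <= edge_weight f U C.
Proof.
rewrite -!prod_nat_const !(big_mkcond (fun z => z \in _)) -big_split /=.
apply: leq_prod => z _; rewrite /vertex_weight !inE.
by case: (z \in f); case: (z \in C); case: (z \in U).
Qed.

Lemma final_edge_weight_lb f U C : #|U| <= 1 ->
  2 ^ #|~: f| * 3 ^ #|f| <= 3 ^ #|C :&: f|.+1 * edge_weight f U C.
Proof.
move=> U1; have Uf : #|f :&: U| <= 1 by rewrite (leq_trans _ U1) ?subset_leq_card ?subsetIr.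
have cf : #|f| <= #|f :\: (C :|: U)| + #|C :&: f|.+1.
  rewrite cardsD setIUr setIC; have := cardsU (C :&: f) (f :&: U).
  have := subset_leq_card (subsetIl f (C :&: f :|: f :&: U)); lia.
have cf3 : 3 ^ #|f| <= 3 ^ #|f :\: (C :|: U)| * 3 ^ #|C :&: f|.+1.
  by rewrite -expnD leq_pexp2l.
apply: leq_trans (leq_mul (leqnn _) cf3) _.
by rewrite mulnA mulnC leq_mul2l edge_weight_lb orbT.
Qed.

Lemma final_potential_bound F U C N f : #|U| <= 1 ->
  potential F U C <= #|F| * 2 ^ #|T| * N -> f \in F ->
  3 ^ #|f| <= 3 ^ #|C :&: f|.+1 * (#|F| * N * 2 ^ #|f|).
Proof.
move=> U1 bound fF; rewrite -(leq_pmul2l (expn_gt0 2 #|~: f|)).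
apply: leq_trans (final_edge_weight_lb f C U1) _.
rewrite mulnCA leq_mul2l; apply/orP; right.
apply: leq_trans (edge_weight_le_potential U C fF) (leq_trans bound _).
by rewrite -(cardsC f) expnD; nia.
Qed.

End Potential.

Section RealEstimates.
Local Open Scope R_scope.

Lemma ln_le_sub1 x : 0 < x -> ln x <= x - 1.
Proof. by move=> x_gt0; have := exp_ineq1_le (ln x); rewrite exp_ln //; lra. Qed.

Lemma ln_le x y : 0 < x -> x <= y -> ln x <= ln y.
Proof. by move=> x_gt0 [xy | <-]; [left; apply: ln_increasing | right]. Qed.

Lemma ln3_bounds : 1 <= ln 3 <= 2 /\ 1 / 3 <= ln 3 - ln 2.
Proof.
have ln_div23 : ln (2 / 3) = ln 2 - ln 3.
  by rewrite /Rdiv ln_mult ?ln_Rinv; lra.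
have := @ln_le_sub1 (2 / 3) ltac:(lra); have := @ln_le_sub1 3 ltac:(lra).
have : ln (exp 1) <= ln 3 by apply: ln_le; [exact: exp_pos | exact: exp_le_3].
by rewrite ln_exp ln_div23; lra.
Qed.

Lemma log_budget L k c : 5 <= L -> L ^ 3 <= k -> 0 <= c -> 100 * c + 1 <= k ->
  L * L + (L + 1) + k * ln 2 + (c + 1) * ln 3 < k * ln 3.
Proof.
move=> L_ge5 Lk c_ge0 ck; have [[ln3_ge1 ln3_le2] ln32] := ln3_bounds.
have : k * (1 / 3) <= k * (ln 3 - ln 2) by apply: Rmult_le_compat_l; lra.
have : (c + 1) * ln 3 <= (c + 1) * 2 by apply: Rmult_le_compat_l; lra.
have : 5 * (L * L) <= L ^ 3 by simpl; nra.
nra.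
Qed.

Lemma INR_expn_exp b k : (0 < b)%nat -> INR (b ^ k) = exp (INR k * ln (INR b)).
Proof.
move=> b_gt0; rewrite -[exp _]/(Rpower (INR b) (INR k)) Rpower_pow; last exact/lt_0_INR/ltP.
by elim: k => [|k IH] //=; rewrite expnS mult_INR IH.
Qed.

Lemma power_budget n k c e : (243 <= n)%nat ->
  INR e <= Rpower (INR n) (ln (INR n)) -> ln (INR n) ^ 3 <= INR k ->
  (100 * c < k)%nat -> (3 ^ c.+1 * (e * n.+1 * 2 ^ k) < 3 ^ k)%nat.
Proof.
move=> n_ge he hk ck; apply/ltP/INR_lt.
have n_ge' : 243 <= INR n by move/leP/le_INR: n_ge; rewrite INR_IZR_INZ.
set L := ln (INR n) in he hk.
have L_ge5 : 5 <= L.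
  have [[ln3_ge1 _] _] := ln3_bounds.
  have : ln (3 ^ 5) <= L by apply: ln_le; simpl; lra.
  by rewrite ln_pow; [simpl; lra | lra].
have n1 : INR n.+1 <= exp (L + 1).
  rewrite S_INR exp_plus exp_ln; last lra.
  by have := exp_ineq1_le 1; nra.
have ck' : 100 * INR c + 1 <= INR k.
  by move/leP/le_INR: ck; rewrite S_INR mult_INR INR_IZR_INZ.
have := log_budget L_ge5 hk (pos_INR c) ck'.
have i2 : INR 2 = 2 by rewrite INR_IZR_INZ.
have i3 : INR 3 = 3 by rewrite INR_IZR_INZ.
rewrite mult_INR !INR_expn_exp // !mult_INR INR_expn_exp // i2 i3 [INR c.+1]S_INR => budget.
apply: (Rle_lt_trans _
  (exp ((INR c + 1) * ln 3) * (exp (L * L) * exp (L + 1) * exp (INR k * ln 2)))).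
  apply: Rmult_le_compat_l; first by left; apply: exp_pos.
  apply: Rmult_le_compat_r; first by left; apply: exp_pos.
  by apply: Rmult_le_compat; rewrite -?S_INR; auto using pos_INR.
by rewrite -!exp_plus; apply: exp_increasing; lra.
Qed.

End RealEstimates.

Theorem lemma6p1 :
  exists n0 : nat, forall n : nat, (n0 <= n)%nat ->
  forall F : {set {set 'I_n}},
    (INR #|F| <= Rpower (INR n) (ln (INR n)))%R ->
    (forall f, f \in F -> (ln (INR n) ^ 3 <= INR #|f|)%R) ->
    waiter_strategy (fun C : {set 'I_n} =>
      forall f, f \in F -> (INR #|f| / 100 <= INR #|C :&: f|)%R).
Proof.
exists 243 => n n_ge F hF hf.
apply: (@waiter_wins_potential _ F _ (#|F| * 2 ^ #|'I_n| * n.+1)).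
- move=> U C U1 bound f fF; apply: Rnot_lt_le => small.
  have ck : (100 * #|C :&: f| < #|f|)%N.
    have i100 : INR 100 = 100%R by rewrite INR_IZR_INZ.
    by apply/ltP/INR_lt; rewrite mult_INR i100; lra.
  have := final_potential_bound U1 bound fF.
  by rewrite leqNgt (power_budget n_ge hF (hf f fF) ck).
- by apply/pred0P => z; rewrite /= !inE.
- by rewrite potential_init cardsT card_ord.
Qed.
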